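(* Let $G$ be a connected (finite, simple) graph, $\mathcal{F}$ a maximum induced forest of $G$, $S=V(G)\setminus V(\mathcal{F})$, $H$ the contracted graph, and $B$ a skeleton of $H$ with the maximum possible number of 2-edges among all skeletons (all as defined in the context). Let $L_S$ be the set of vertices of $S$ that are leaves of $B$ and $B_1=B[V(B)\setminus L_S]$. Then for each 1-edge $\overrightarrow{uv}$ of $B_1$ (directed from $u$ to its parent $v$), either $u$ is a tree vertex, or some child $u'$ of $u$ in $B_1$ is a tree vertex and $u'u$ is a 2-edge.
   Context: A maximum induced forest of $G$ is an induced forest of $G$ with the maximum number of vertices. Let $\mathcal{T}$ be the set of connected components (trees) of $\mathcal{F}$ and $S=V(G)\setminus V(\mathcal{F})$. The graph $H$ has vertex set $\{x_T : T\in\mathcal{T}\}\cup S$ (the $x_T$ are called tree vertices, the vertices of $S$ non-tree vertices) and edge set consisting of all edges of $G[S]$ together with all pairs $ux_T$ with $u\in S$, $T\in\mathcal{T}$ such that $u$ has at least one neighbor in $V(T)$ in $G$. An edge $ux_T$ of $H$ is a 2-edge if $u$ has at least two neighbors in $V(T)$ in $G$; all other edges of $H$ (including all edges with both endpoints in $S$) are 1-edges. A skeleton is a spanning tree of $H$ rooted at some tree vertex, with all edges directed towards the root (an in-arborescence). The parent of a non-root vertex is its unique out-neighbor; its children are its in-neighbors. *)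

From mathcomp Require Import all_boot.
Set Implicit Arguments. Unset Strict Implicit. Unset Printing Implicit Defensive.

Definition simple_graph (T : finType) (e : rel T) : Prop :=
  symmetric e /\ irreflexive e.

Definition connected_graph (T : finType) (e : rel T) : Prop :=
  forall x y : T, connect e x y.

Definition induced_forest (T : finType) (e : rel T) (F : {set T}) : Prop :=
  forall s : seq T, uniq s -> 3 <= size s -> {subset s <= F} -> ~~ cycle e s.

Definition max_induced_forest (T : finType) (e : rel T) (F : {set T}) : Prop :=
  induced_forest e F /\
  forall F' : {set T}, induced_forest e F' -> #|F'| <= #|F|.

Definition restr_rel (T : finType) (e : rel T) (F : {set T}) : rel T :=
  fun x y => [&& x \in F, y \in F & e x y].

Definition forest_comps (T : finType) (e : rel T) (F : {set T}) : {set {set T}} :=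
  [set [set y in F | connect (restr_rel e F) x y] | x in F].

(* Vertices of the contracted graph H: inl u for u in S = V(G) \ F
   (non-tree vertices), inr C for a component C of G[F] (tree vertex x_C). *)
Notation HVert T := (T + {set T})%type.

Definition HV (T : finType) (e : rel T) (F : {set T}) : {set HVert T} :=
  [set x : HVert T | match x with
                     | inl u => u \notin F
                     | inr C => C \in forest_comps e F
                     end].

Definition is_tree_vertex (T : finType) (x : HVert T) : bool :=
  if x is inr _ then true else false.

Definition nbrs_in (T : finType) (e : rel T) (u : T) (C : {set T}) : nat :=
  #|[set w in C | e u w]|.

Definition Hadj (T : finType) (e : rel T) (F : {set T}) : rel (HVert T) :=
  fun a b =>
    match a, b with
    | inl u, inl v => [&& u \notin F, v \notin F & e u v]
    | inl u, inr C | inr C, inl u =>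
        [&& u \notin F, C \in forest_comps e F & 0 < nbrs_in e u C]
    | inr _, inr _ => false
    end.

Definition two_edge (T : finType) (e : rel T) (F : {set T}) : rel (HVert T) :=
  fun a b =>
    match a, b with
    | inl u, inr C | inr C, inl u =>
        [&& u \notin F, C \in forest_comps e F & 1 < nbrs_in e u C]
    | _, _ => false
    end.

(* A skeleton: spanning in-arborescence of H with root r (a tree vertex),
   given by its parent map p (only relevant on V(H) \ {r}): every non-root
   vertex x has its parent p x in V(H), x p(x) is an edge of H, and iterating
   the parent map from x reaches the root. *)
Definition skeleton (T : finType) (e : rel T) (F : {set T})
    (r : HVert T) (p : HVert T -> HVert T) : Prop :=
  [/\ r \in HV e F, is_tree_vertex r &
      forall x, x \in HV e F -> x != r ->
        [/\ p x \in HV e F, Hadj e F x (p x) & exists n, iter n p x = r]].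

Definition children (T : finType) (e : rel T) (F : {set T})
    (r : HVert T) (p : HVert T -> HVert T) (x : HVert T) : {set HVert T} :=
  [set y in HV e F | (y != r) && (p y == x)].

Definition num_two_edges (T : finType) (e : rel T) (F : {set T})
    (r : HVert T) (p : HVert T -> HVert T) : nat :=
  #|[set x in HV e F | (x != r) && two_edge e F x (p x)]|.

Definition max_skeleton (T : finType) (e : rel T) (F : {set T})
    (r : HVert T) (p : HVert T -> HVert T) : Prop :=
  skeleton e F r p /\
  forall r' p', skeleton e F r' p' -> num_two_edges e F r' p' <= num_two_edges e F r p.

Definition skel_deg (T : finType) (e : rel T) (F : {set T})
    (r : HVert T) (p : HVert T -> HVert T) (x : HVert T) : nat :=
  #|children e F r p x| + (x != r).

Definition LS (T : finType) (e : rel T) (F : {set T})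
    (r : HVert T) (p : HVert T -> HVert T) : {set HVert T} :=
  [set x in HV e F | ~~ is_tree_vertex x & skel_deg e F r p x == 1].

From mathcomp Require Import all_boot zify.
From Stdlib Require Import Classical ClassicalEpsilon.
Set Implicit Arguments. Unset Strict Implicit. Unset Printing Implicit Defensive.

(* A vertex x of S has two neighbours in one tree C of F, for otherwise F + x
   would still be an induced forest.  The skeleton B is then modified by an
   exchange: if a vertex t below a has a 2-edge to a vertex w not below a,
   reversing the B-path from t up to a, hanging t below w and dropping the
   edge a p(a) yields a skeleton with more 2-edges, unless a p(a) is itself
   a 2-edge.  With a = t = x and w = x_C, maximality puts x_C below x; with a
   the child c of x on the path from x_C and w = x, it makes c x a 2-edge, so
   c is a tree vertex. *)

Section ForestCycles.
Variables (T : finType) (e : rel T) (F : {set T}).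

Lemma path_restr_rel x s :
  x \in F -> {subset s <= F} -> path e x s -> path (restr_rel e F) x s.
Proof.
elim: s x => //= y s IHs x xF sF /andP[exy pys].
have yF : y \in F by apply: sF; rewrite mem_head.
rewrite /restr_rel xF yF exy IHs // => z zs.
by apply: sF; rewrite inE zs orbT.
Qed.

Lemma cycle_through_two_nbrs x s :
  symmetric e -> uniq s -> 3 <= size s -> x \in s -> {subset s <= x |: F} ->
  cycle e s -> exists2 C, C \in forest_comps e F & 1 < nbrs_in e x C.
Proof.
move=> esym + + xs; case/rot_to: xs => i q rot_s.
rewrite -(rot_uniq i) -(size_rot i) -(rot_cycle i) rot_s => uq sq sF.
have qF : {subset q <= F}.
  move=> y yq; have /sF : y \in s by rewrite -(mem_rot i) rot_s inE yq orbT.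
  rewrite !inE; case: eqP => [yx|//].
  by move: uq; rewrite /= -yx yq.
case: q rot_s uq sq qF => [|a [|b q]] _ uq sq qF; [by []|by []|].
rewrite /cycle rcons_path => /andP[/andP[exa pa] /= ezx].
set z := last b q in ezx.
have aF : a \in F by apply: qF; rewrite mem_head.
have zbq : z \in b :: q by apply: mem_last.
have bqF : {subset b :: q <= F} by move=> y yq; apply: qF; rewrite inE yq orbT.
have zF : z \in F by apply: bqF.
have az : a != z by apply: contraTneq uq => ->; rewrite /= inE zbq andbF.
have conn_az : connect (restr_rel e F) a z.
  exact: (path_connect (path_restr_rel aF bqF pa) (mem_last a (b :: q))).
exists [set y in F | connect (restr_rel e F) a y]; first by apply/imsetP; exists a.
apply: leq_trans (subset_leq_card (_ : [set a; z] \subset _)); first by rewrite cards2 az.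
apply/subsetP => y; rewrite !inE => /orP[] /eqP->.
  by rewrite aF connect0 exa.
by rewrite zF conn_az esym.
Qed.

Lemma max_induced_forest_two_nbrs x :
  symmetric e -> max_induced_forest e F -> x \notin F ->
  exists2 C, C \in forest_comps e F & 1 < nbrs_in e x C.
Proof.
move=> esym [Fforest Fmax] xF.
have not_forest : ~ induced_forest e (x |: F).
  by move=> /Fmax; rewrite cardsU1 xF ltnn.
apply: NNPP => no_C; apply: not_forest => s us ss sF; apply/negP => cyc.
have xs : x \in s.
  apply: contraLR cyc => xs; apply: Fforest => // y ys.
  by have := sF y ys; rewrite !inE; case: eqP => // yx; rewrite -yx ys in xs.
by apply: no_C; apply: (cycle_through_two_nbrs esym us ss xs sF).
Qed.

End ForestCycles.

Section Depth.
Variables (X : eqType) (r : X) (p : X -> X).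

Definition depth (y : X) : nat :=
  if excluded_middle_informative (exists n, iter n p y == r) is left reach
  then ex_minn reach else 0.

Lemma depthP y n : iter n p y = r -> iter (depth y) p y = r /\ depth y <= n.
Proof.
move=> yr; rewrite /depth; case: excluded_middle_informative => [reach|[]].
  by case: ex_minnP => m /eqP -> /(_ n); rewrite yr eqxx => /(_ isT).
by exists n; apply/eqP.
Qed.

Lemma depth_root : depth r = 0.
Proof. by have [_] := @depthP r 0 erefl; rewrite leqn0 => /eqP. Qed.

Definition descendant (a y : X) : bool := iter (depth y - depth a) p y == a.

Lemma descendant_refl : reflexive descendant.
Proof. by move=> a; rewrite /descendant subnn. Qed.

Lemma descendant_depth a y : descendant a y -> depth a <= depth y.
Proof.
rewrite /descendant leqNgt; apply: contraL => lt_ya.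
have -> : depth y - depth a = 0 by lia.
by apply: contraTneq lt_ya => /= ->; rewrite ltnn.
Qed.

Lemma descendant_depth_lt a y : descendant a y -> y != a -> depth a < depth y.
Proof.
move=> ay ya; rewrite ltn_neqAle descendant_depth // andbT.
by apply: contraNneq ya => eq_ay; move: ay; rewrite /descendant eq_ay subnn.
Qed.

Lemma descendant_trans : transitive descendant.
Proof.
move=> x a y ax xy; have le_ax := descendant_depth ax.
have le_xy := descendant_depth xy; move: ax xy; rewrite /descendant.
have -> : depth y - depth a = (depth x - depth a) + (depth y - depth x) by lia.
by rewrite iterD => /eqP ax /eqP ->; rewrite ax.
Qed.

End Depth.

Section ContractedGraph.
Variables (T : finType) (e : rel T) (F : {set T}).

Lemma Hadj_sym : symmetric e -> symmetric (Hadj e F).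
Proof. by move=> esym [x|X] [y|Y] //=; rewrite esym andbCA. Qed.

Lemma two_edge_sym : symmetric (two_edge e F).
Proof. by move=> [x|X] [y|Y]. Qed.

Lemma two_edge_Hadj x y : two_edge e F x y -> Hadj e F x y.
Proof. by case: x => [x|X]; case: y => [y|Y] //= /and3P[-> -> /ltnW ->]. Qed.

Lemma two_edge_HV x y : two_edge e F x y -> x \in HV e F.
Proof. by case: x => [x|X]; case: y => [y|Y] //= /and3P[xF XF _]; rewrite inE. Qed.

End ContractedGraph.

Section Skeleton.
Variables (T : finType) (e : rel T) (F : {set T}) (r : HVert T) (p : HVert T -> HVert T).
Hypothesis sk : skeleton e F r p.

Local Notation V := (HV e F).
Local Notation depth := (depth r p).
Local Notation descendant := (descendant r p).

Lemma skeleton_parent y : y \in V -> y != r -> p y \in V /\ Hadj e F y (p y).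
Proof. by case: sk => _ _ skp yV yr; have [] := skp y yV yr. Qed.

Lemma skeleton_iter_depth y : y \in V -> iter (depth y) p y = r.
Proof.
case: sk => rV _ skp yV; have [n yr] : exists n, iter n p y = r.
  case: (eqVneq y r) => [->|yr]; first by exists 0.
  by have [] := skp y yV yr.
by have [] := depthP yr.
Qed.

Lemma skeleton_depth_parent y : y \in V -> y != r -> depth y = (depth (p y)).+1.
Proof.
move=> yV yr; have [pyV _] := skeleton_parent yV yr.
have depth_gt0 : 0 < depth y.
  by rewrite lt0n; apply: contraNneq yr => d0; rewrite -(skeleton_iter_depth yV) d0.
have [_ le1] := depthP (etrans (iterSr _ _ _) (skeleton_iter_depth pyV)).
have pyr : iter (depth y).-1 p (p y) = r.
  by rewrite -iterSr prednK // skeleton_iter_depth.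
have [_ le2] := depthP pyr.
lia.
Qed.

Lemma skeleton_iter y i : y \in V -> i <= depth y ->
  iter i p y \in V /\ depth (iter i p y) = depth y - i.
Proof.
move=> yV; elim: i => [|i IHi] lt_iy; first by rewrite subn0.
have [zV dz] := IHi (ltnW lt_iy).
have zr : iter i p y != r by apply/eqP => zr; move: dz; rewrite zr depth_root; lia.
have [pzV _] := skeleton_parent zV zr.
by split=> //; move: dz; rewrite (skeleton_depth_parent zV zr) /=; lia.
Qed.

Lemma descendant_root y : y \in V -> descendant r y.
Proof. by move=> yV; rewrite /descendant depth_root subn0 skeleton_iter_depth. Qed.

Lemma descendant_parent y : y \in V -> y != r -> descendant (p y) y.
Proof.
by move=> yV yr; rewrite /descendant (skeleton_depth_parent yV yr) subSnn.
Qed.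

Lemma descendant_HV a y : y \in V -> descendant a y -> a \in V.
Proof.
move=> yV /eqP <-; apply: (skeleton_iter yV _).1; exact: leq_subr.
Qed.

Lemma parent_descendant a y :
  y \in V -> y != a -> descendant a y -> descendant a (p y).
Proof.
move=> yV ya ay; have lt_ay := descendant_depth_lt ay ya.
have yr : y != r by apply: contraTneq lt_ay => ->; rewrite depth_root.
move: ay; rewrite /descendant (skeleton_depth_parent yV yr) in lt_ay *.
by rewrite subSn // iterSr.
Qed.

Lemma descendant_child a y : y \in V -> descendant a y -> y != a ->
  exists c, [/\ c \in V, c != r, p c = a & descendant c y].
Proof.
move=> yV ay ya; have lt_ay := descendant_depth_lt ay ya.
set n := (depth y - depth a).-1.
have [cV dc] := @skeleton_iter y n yV (leq_trans (leq_pred _) (leq_subr _ _)).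
exists (iter n p y); split => //.
- by apply/eqP => cr; move: dc; rewrite cr depth_root; lia.
- by rewrite -iterS prednK ?subn_gt0 //; apply/eqP.
- by rewrite /descendant dc; have -> : depth y - (depth y - n) = n by lia.
Qed.

Section Exchange.
Hypothesis esym : symmetric e.
Variables a t w : HVert T.
Hypotheses (ta : descendant a t) (wa : ~~ descendant a w) (tw : two_edge e F t w).

Local Notation k := (depth t - depth a).

Let tV : t \in V. Proof. exact: two_edge_HV tw. Qed.
Let wV : w \in V. Proof. by move: tw; rewrite two_edge_sym; apply: two_edge_HV. Qed.
Let ar : a != r. Proof. by apply: contraNneq wa => ->; apply: descendant_root. Qed.
Let depth_a_gt0 : 0 < depth a.
Proof. by rewrite (skeleton_depth_parent (descendant_HV tV ta) ar). Qed.

Lemma path_vertex i : i <= k ->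
  [/\ iter i p t \in V, iter i p t != r & depth (iter i p t) = depth t - i].
Proof.
move=> ik; have [iV di] := skeleton_iter tV (leq_trans ik (leq_subr _ _)).
split=> //; apply/eqP => ir.
by move: di depth_a_gt0 (descendant_depth ta); rewrite ir depth_root; lia.
Qed.

Definition on_path x := descendant a x && descendant x t.

Lemma on_pathP x : reflect (exists2 i, i <= k & x = iter i p t) (on_path x).
Proof.
apply: (iffP andP) => [[ax /eqP xt]|[i ik ->]].
  by exists (depth t - depth x) => //; have := descendant_depth ax; lia.
have [_ _ di] := path_vertex ik; rewrite /descendant di.
have -> : depth t - (depth t - i) = i by lia.
have -> : depth t - i - depth a = k - i by lia.
by rewrite -iterD subnK // ta.
Qed.

Lemma on_path_proper x : on_path x -> x != a -> exists2 i, i < k & x = iter i p t.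
Proof.
case/on_pathP => i ik -> ia; exists i => //.
by rewrite ltn_neqAle ik andbT; apply: contraNneq ia => ->; exact: ta.
Qed.

Lemma iter_path_neq i : i < k -> iter i.+1 p t != t.
Proof. by move=> ik; apply/eqP => it; have [_ _] := path_vertex ik; rewrite it; lia. Qed.

(* Reverse the path from [t] up to [a], hang [t] below [w], drop [a -> p a]. *)
Definition exchange x :=
  if on_path x then (if x == t then w else iter (depth t - depth x).-1 p t)
  else p x.

Lemma exchange_t : exchange t = w.
Proof. by rewrite /exchange /on_path ta descendant_refl eqxx. Qed.

Lemma exchange_iter i : i < k -> exchange (iter i.+1 p t) = iter i p t.
Proof.
move=> ik; have [_ _ di] := path_vertex ik.
rewrite /exchange (introT (on_pathP _)); last by exists i.+1.
by rewrite (negbTE (iter_path_neq ik)) di; congr iter; lia.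
Qed.

Lemma exchange_off x : ~~ on_path x -> exchange x = p x.
Proof. by rewrite /exchange => /negbTE ->. Qed.

Lemma exchange_reach_step y :
  (exists n, iter n exchange (exchange y) = r) -> exists n, iter n exchange y = r.
Proof. by case=> n yr; exists n.+1; rewrite iterSr. Qed.

Lemma exchange_reach_out y : y \in V -> ~~ descendant a y ->
  exists n, iter n exchange y = r.
Proof.
have [m] := ubnP (depth y); elim: m y => // m IHm y lt_ym yV ay.
have [->|yr] := eqVneq y r; first by exists 0.
apply: exchange_reach_step; rewrite exchange_off; last by rewrite /on_path (negbTE ay).
have [pyV _] := skeleton_parent yV yr.
apply: IHm => //; first by rewrite (skeleton_depth_parent yV yr) in lt_ym.
by apply: contra ay => apy; apply: descendant_trans apy (descendant_parent yV yr).
Qed.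

Lemma exchange_reach_path i : i <= k -> exists n, iter n exchange (iter i p t) = r.
Proof.
elim: i => [|i IHi] ik; apply: exchange_reach_step.
  by rewrite exchange_t; apply: exchange_reach_out.
by rewrite exchange_iter //; apply: IHi (ltnW ik).
Qed.

Lemma exchange_reach_in y : y \in V -> descendant a y -> exists n, iter n exchange y = r.
Proof.
have [m] := ubnP (depth y); elim: m y => // m IHm y lt_ym yV ay.
have [/on_pathP[i ik ->]|yP] := boolP (on_path y); first exact: exchange_reach_path.
have ya : y != a.
  by apply: contraNneq yP => ->; apply/on_pathP; exists k; rewrite ?(eqP ta).
have yr : y != r.
  by apply: contraTneq (descendant_depth_lt ay ya) => ->; rewrite depth_root.
have [pyV _] := skeleton_parent yV yr.
apply: exchange_reach_step; rewrite exchange_off //.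
apply: IHm (parent_descendant yV ya ay) => //.
by rewrite (skeleton_depth_parent yV yr) in lt_ym.
Qed.

Lemma exchange_skeleton : skeleton e F r exchange.
Proof.
case: sk => rV r_tree _; split => // y yV yr.
suff [eyV Hye] : exchange y \in V /\ Hadj e F y (exchange y).
  split => //; have [ay|ay] := boolP (descendant a y).
    exact: exchange_reach_in.
  exact: exchange_reach_out.
have [/on_pathP[[|i] ik ->]|yP] := boolP (on_path y).
- by rewrite exchange_t; split => //; apply: two_edge_Hadj.
- have [iV ir _] := path_vertex (ltnW ik).
  have [_ Hi] := skeleton_parent iV ir.
  by rewrite exchange_iter // Hadj_sym.
- by rewrite exchange_off //; apply: skeleton_parent.
Qed.

Lemma on_path_parent x : on_path x -> x != a -> on_path (p x).
Proof. by move=> xP /(on_path_proper xP)[i ik ->]; apply/on_pathP; exists i.+1. Qed.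

Lemma exchange_num_two_edges : ~~ two_edge e F a (p a) ->
  num_two_edges e F r p < num_two_edges e F r exchange.
Proof.
move=> ap; rewrite /num_two_edges.
set S := [set x in V | _]; set S' := [set x in V | _].
have Sa x : x \in S -> x != a.
  by case/setIdP=> _ /andP[_]; apply: contraTneq => ->.
have tS' : t \in S'.
  by have [_ tr _] := path_vertex (leq0n k); apply/setIdP; rewrite tV tr exchange_t.
pose f x := if on_path x then p x else x.
have fS : {in S, forall x, f x \in S' :\ t}.
  move=> x /[dup] /Sa xa /setIdP[xV /andP[xr xpx]]; rewrite /f in_setD1.
  case: ifPn => [xP|xP].
    have [i ik def_x] := on_path_proper xP xa; rewrite def_x in xpx *.
    have [jV jr _] := path_vertex ik.
    rewrite -iterS iter_path_neq //; apply/setIdP.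
    by rewrite jV jr exchange_iter // two_edge_sym.
  have xt : x != t by apply: contraNneq xP => ->; apply/andP; rewrite ta descendant_refl.
  by rewrite xt; apply/setIdP; rewrite xV xr exchange_off.
have f_inj : {in S &, injective f}.
  move=> x y xS yS; rewrite /f.
  case: ifPn => xP; case: ifPn => yP fxy.
  - have [i ik def_x] := on_path_proper xP (Sa x xS).
    have [j jk def_y] := on_path_proper yP (Sa y yS).
    have [_ _ di] := path_vertex ik; have [_ _ dj] := path_vertex jk.
    have dij : depth t - i.+1 = depth t - j.+1.
      by rewrite -di -dj !iterS -def_x -def_y fxy.
    have ij : i = j by move: dij ik jk (descendant_depth ta); lia.
    by rewrite def_x def_y ij.
  - by move: (on_path_parent xP (Sa x xS)); rewrite fxy (negbTE yP).
  - by move: (on_path_parent yP (Sa y yS)); rewrite -fxy (negbTE xP).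
  - by [].
rewrite -(card_in_imset f_inj) (cardsD1 t S') tS' add1n ltnS subset_leq_card //.
by apply/subsetP => _ /imsetP[x xS ->]; apply: fS.
Qed.

End Exchange.

End Skeleton.

Lemma max_skeleton_exchange (T : finType) (e : rel T) (F : {set T})
    (r : HVert T) (p : HVert T -> HVert T) (a t w : HVert T) :
  symmetric e -> max_skeleton e F r p ->
  descendant r p a t -> ~~ descendant r p a w -> two_edge e F t w ->
  two_edge e F a (p a).
Proof.
move=> esym [sk p_max] ta wa tw; apply: contraT => ap.
have := p_max _ _ (exchange_skeleton sk esym ta wa tw).
by rewrite leqNgt exchange_num_two_edges.
Qed.

Theorem corollary4 (T : finType) (e : rel T) (F : {set T})
    (r : HVert T) (p : HVert T -> HVert T) :
  simple_graph e -> connected_graph e -> max_induced_forest e F ->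
  max_skeleton e F r p ->
  forall u : HVert T,
    u \in HV e F -> u != r ->
    u \notin LS e F r p -> p u \notin LS e F r p ->
    ~~ two_edge e F u (p u) ->
    is_tree_vertex u \/
    exists u' : HVert T,
      [/\ u' \in children e F r p u, u' \notin LS e F r p,
          is_tree_vertex u' & two_edge e F u' u].
Proof.
move=> [esym _] _ F_max p_max [x|//] xV _ _ _ xp; [right | by left].
have xF : x \notin F by rewrite inE in xV.
have [C CF xC] := max_induced_forest_two_nbrs esym F_max xF.
have xC2 : two_edge e F (inl x) (inr C) by rewrite /= xF CF.
have [Cx|Cx] := boolP (descendant r p (inl x) (inr C)); last first.
  by rewrite (max_skeleton_exchange esym p_max (descendant_refl _ _ _) Cx xC2) in xp.
have CV : inr C \in HV e F by rewrite inE.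
have [c [cV cr pc cC]] := descendant_child p_max.1 CV Cx isT.
have xc : ~~ descendant r p c (inl x).
  apply/negP => /descendant_depth.
  by rewrite (skeleton_depth_parent p_max.1 cV cr) pc ltnn.
have Cx2 : two_edge e F (inr C) (inl x) by rewrite two_edge_sym.
have := max_skeleton_exchange esym p_max cC xc Cx2; rewrite pc.
clear cC xc; case: c cV cr pc => [//|D] DV Dr pD xD.
exists (inr D); split => //; first by apply/setIdP; rewrite DV Dr pD eqxx.
by rewrite inE /= andbF.
Qed.
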